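(* For a positive integer $n$, let $D_n$ be the tournament on vertex set $\{v_1,\ldots,v_n\}$ in which, for $1\le i<j\le n$ with $(i,j)\neq(1,n)$, the edge between $v_i$ and $v_j$ is directed from $v_i$ to $v_j$, and the edge between $v_1$ and $v_n$ is directed from $v_n$ to $v_1$. Then for all positive integers $n,k$ (with $n\ge 2$), $P_{v_1\approx v_n}(D_n;k)=k(k-1)^{n-2}$, $P_{v_1\not\approx v_n}(D_n;k)=k^{n-1}(k-1)$, and consequently $P(D_n;k)=k(k-1)^{n-2}+k^{n-1}(k-1)$.
   Context: For a positive integer $k$, a proper $k$-coloring of a digraph $D$ is a map $c:V(D)\to\{1,\ldots,k\}$ such that each color class induces a subdigraph with no directed cycle; $P(D;k)$ is the number of proper $k$-colorings. For vertices $u,v$, $P_{u\approx v}(D;k)$ is the number of proper $k$-colorings in which $u$ and $v$ receive the same color, and $P_{u\not\approx v}(D;k)$ the number in which they receive different colors. *)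

From mathcomp Require Import all_boot.
From mathcomp Require Import boolp.
Set Implicit Arguments. Unset Strict Implicit. Unset Printing Implicit Defensive.

Definition induces_acyclic (V : finType) (e : rel V) (A : {set V}) : Prop :=
  forall s : seq V, s != [::] -> all (fun x => x \in A) s -> uniq s ->
    ~~ cycle e s.

Definition proper_coloring (V : finType) (e : rel V) (k : nat)
    (c : {ffun V -> 'I_k}) : Prop :=
  forall a : 'I_k, induces_acyclic e [set x | c x == a].

Definition chrom_count (V : finType) (e : rel V) (k : nat) : nat :=
  #|[set c : {ffun V -> 'I_k} | `[< proper_coloring e c >] ]|.

Definition chrom_count_same (V : finType) (e : rel V) (k : nat) (u v : V) : nat :=
  #|[set c : {ffun V -> 'I_k} | `[< proper_coloring e c >] && (c u == c v)]|.
Definition chrom_count_diff (V : finType) (e : rel V) (k : nat) (u v : V) : nat :=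
  #|[set c : {ffun V -> 'I_k} | `[< proper_coloring e c >] && (c u != c v)]|.

(* The tournament D_n on vertices 'I_n, where vertex i (0-based) is v_{i+1}:
   for i < j, arc i -> j, except the pair {0, n-1}, oriented n-1 -> 0. *)
Definition Dn_arc (n : nat) : rel 'I_n := fun i j =>
  if (val i == 0) && (val j == n.-1) then false
  else if (val i == n.-1) && (val j == 0) then true
  else val i < val j.

(* All arcs of D_n go up in index except v_n -> v_1, so a directed cycle must
   use that arc and then climb from v_1 back to v_n through a middle vertex;
   conversely v_1 -> m -> v_n -> v_1 is a cycle for every middle vertex m.
   Hence a colouring is proper iff v_1 and v_n get different colours, or no
   middle vertex shares their common colour.  Fixing the colour of v_1, the
   two counts are 1 * (k-1)^(n-2) and (k-1) * k^(n-2). *)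

From mathcomp Require Import all_boot.
From mathcomp Require Import boolp zify.

Lemma exists_next_leq (T : finType) (f : T -> nat) (s : seq T) :
  s != [::] -> exists2 x, x \in s & f (next s x) <= f x.
Proof.
case: s => // x0 s _.
have [m ms m_max] := @arg_maxnP _ x0 [in x0 :: s] f (mem_head _ _).
by exists m => //; apply: m_max; exact: etrans (mem_next _ _) ms.
Qed.

Lemma card_ffun_family (T : finType) (k : nat) (F : T -> pred 'I_k) :
  #|[set c : {ffun T -> 'I_k} | [forall x, c x \in F x]]| = \prod_x #|F x|.
Proof.
rewrite -[RHS]big_enum -[RHS](big_map (fun x => #|F x|) xpredT id) -foldrE.
by rewrite -card_family; apply: eq_card => c; rewrite inE; apply/forallP/familyP.
Qed.

Lemma chrom_count_same_diff {V : finType} (e : rel V) (k : nat) (u v : V) :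
  chrom_count e k = chrom_count_same e k u v + chrom_count_diff e k u v.
Proof.
rewrite /chrom_count -(cardID [set c : {ffun V -> 'I_k} | c u == c v]).
by congr (_ + _); apply: eq_card => c; rewrite !inE andbC.
Qed.

Lemma card_partition_at {T : finType} {k : nat} (S : {set {ffun T -> 'I_k}}) (v : T) :
  #|S| = \sum_a #|[set c in S | c v == a]|.
Proof.
rewrite -sum1_card (partition_big (fun c : {ffun T -> 'I_k} => c v) predT) //.
by apply: eq_bigr => a _; rewrite -sum1_card; apply: eq_bigl => c; rewrite !inE.
Qed.

Section Tournament.

Context {n : nat} {v1 vn : 'I_n}.
Hypotheses (n_ge2 : 2 <= n) (v1E : val v1 = 0) (vnE : val vn = n.-1).

Local Notation middle x := ((x != v1) && (x != vn)).

Lemma v1_neq_vn : v1 != vn.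
Proof. by rewrite -(inj_eq val_inj) /= v1E vnE; apply/eqP; lia. Qed.

Lemma middleE x : middle x = (val x != 0) && (val x != n.-1).
Proof. by rewrite -!(inj_eq val_inj) /= v1E vnE. Qed.

Lemma Dn_arc_ltn x y : Dn_arc x y -> ~~ ((x == vn) && (y == v1)) -> val x < val y.
Proof.
rewrite /Dn_arc -!(inj_eq val_inj) /= v1E vnE.
by case: ifP => // _; case: ifP => // ->.
Qed.

Lemma Dn_arc_v1 y : Dn_arc v1 y -> middle y.
Proof.
rewrite middleE /Dn_arc v1E eqxx /=; have := ltn_ord y.
by case: (val y =P n.-1) => //= _; case: ifP => [/andP[/eqP] | _]; lia.
Qed.

Lemma Dn_arc_cycle3 m : middle m -> cycle (@Dn_arc n) [:: v1; m; vn].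
Proof.
rewrite middleE /= /Dn_arc v1E vnE !eqxx /=.
have n1 : (n.-1 == 0) = false by apply/eqP; lia.
case: m => m /= m_lt /andP[m0 mn].
by rewrite (negbTE m0) (negbTE mn) n1 !andbF /=; lia.
Qed.

Lemma Dn_cycle_mem s : s != [::] -> cycle (@Dn_arc n) s ->
  [/\ v1 \in s, vn \in s, next s v1 \in s & middle (next s v1)].
Proof.
move=> s_nil s_cyc; have [x xs] := @exists_next_leq _ val s s_nil.
have [/andP[/eqP x_vn /eqP nx_v1] _ | /(Dn_arc_ltn _ _ (next_cycle s_cyc xs))] :=
  boolP ((x == vn) && (next s x == v1)); last by move=> lt; rewrite leqNgt lt.
subst x; have v1s : v1 \in s by rewrite -nx_v1 mem_next.
by split; rewrite ?mem_next //; apply: Dn_arc_v1; apply: next_cycle s_cyc v1s.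
Qed.

Lemma induces_acyclic_Dn (A : {set 'I_n}) :
  induces_acyclic (@Dn_arc n) A <->
  ~~ [&& v1 \in A, vn \in A & [exists m, middle m && (m \in A)]].
Proof.
split=> [acyc | ].
  apply/negP => /and3P[v1A vnA /existsP[m /andP[m_mid mA]]].
  have uniq3 : uniq [:: v1; m; vn].
    by case/andP: m_mid; rewrite /= !inE negb_or v1_neq_vn !(eq_sym m) => -> ->.
  have all3 : all (fun x => x \in A) [:: v1; m; vn] by rewrite /= v1A mA vnA.
  by move: (acyc [:: v1; m; vn] isT all3 uniq3); rewrite Dn_arc_cycle3.
move=> noA s s_nil /allP sA _; apply/negP.
case/(Dn_cycle_mem _ s_nil) => v1s vns ns nmid.
by case/and3P: noA; split; rewrite ?sA //; apply/existsP; exists (next s v1);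
  rewrite nmid sA.
Qed.

Lemma proper_DnE k (c : {ffun 'I_n -> 'I_k}) :
  `[< proper_coloring (@Dn_arc n) c >] =
  (c v1 != c vn) || [forall m, middle m ==> (c m != c v1)].
Proof.
apply/asboolP/idP => [proper | ].
  have := proper (c v1); rewrite induces_acyclic_Dn !inE eqxx /=.
  case: eqVneq => //= c1n; apply: contraNT => /forallPn[m].
  by rewrite negb_imply negbK => /andP[m_mid cm]; apply/existsP; exists m;
    rewrite inE m_mid cm.
move=> col a; apply/induces_acyclic_Dn; rewrite !inE; apply/negP.
case/and3P=> /eqP c1 /eqP cn /existsP[m /andP[m_mid]]; rewrite inE => /eqP cm.
by move: col; rewrite c1 cn eqxx /= => /forallP/(_ m); rewrite m_mid cm eqxx.
Qed.

Lemma card_middle : #|[pred x : 'I_n | middle x]| = n - 2.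
Proof.
have := cardsD1 vn [set~ v1]; rewrite cardsC1 card_ord !inE eq_sym v1_neq_vn.
rewrite subn2 add1n => ->; apply: eq_card => x.
by rewrite !inE andbC.
Qed.

Lemma card_colorings_constrained k (A B C : {set 'I_k}) :
  #|[set c : {ffun 'I_n -> 'I_k} |
     [&& c v1 \in A, c vn \in B & [forall m, middle m ==> (c m \in C)]]]| =
  #|A| * #|B| * #|C| ^ (n - 2).
Proof.
pose F x := if x == v1 then A else if x == vn then B else C.
have F_v1 : F v1 = A by rewrite /F eqxx.
have F_vn : F vn = B by rewrite /F eq_sym (negbTE v1_neq_vn) eqxx.
have F_mid x : middle x -> F x = C by rewrite /F => /andP[/negbTE -> /negbTE ->].
transitivity #|[set c : {ffun 'I_n -> 'I_k} | [forall x, c x \in F x]]|.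
  apply: eq_card => c; rewrite !inE; apply/and3P/forallP => [[c1 cn cm] x | cF].
    have [-> | x1] := eqVneq x v1; first by rewrite F_v1.
    have [-> | xn] := eqVneq x vn; first by rewrite F_vn.
    have x_mid : middle x by rewrite x1 xn.
    by rewrite (F_mid _ x_mid) (implyP (forallP cm x)).
  split; [by have := cF v1; rewrite F_v1 | by have := cF vn; rewrite F_vn |].
  by apply/forallP => x; apply/implyP => x_mid; rewrite -(F_mid _ x_mid).
rewrite card_ffun_family (bigD1 v1) // (bigD1 vn) /= ?(eq_sym vn) ?v1_neq_vn //.
rewrite F_v1 F_vn mulnA (eq_bigr (fun _ => #|C|)) => [|x /andP[x1 xn]].
  by rewrite prod_nat_const -card_middle; congr (_ * _ ^ _); apply: eq_card => x;
    rewrite !inE andbC.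
by rewrite F_mid // x1.
Qed.

Lemma chrom_count_same_Dn k :
  chrom_count_same (@Dn_arc n) k v1 vn = k * (k - 1) ^ (n - 2).
Proof.
rewrite /chrom_count_same (card_partition_at _ v1).
rewrite (eq_bigr (fun _ => (k - 1) ^ (n - 2))) ?sum_nat_const ?card_ord // => a _.
transitivity #|[set c : {ffun 'I_n -> 'I_k} |
  [&& c v1 \in [set a], c vn \in [set a]
    & [forall m, middle m ==> (c m \in [set~ a])]]]|.
  apply: eq_card => c; rewrite !inE proper_DnE.
  have [-> | _] := eqVneq (c v1) a; last by rewrite andbF.
  case: (c vn =P a) => [-> | /eqP/negbTE cna].
    by rewrite eqxx /= !andbT; apply: eq_forallb => m; rewrite !inE.
  by rewrite [a == _]eq_sym cna andbF.
by rewrite card_colorings_constrained !cards1 cardsC1 card_ord subn1 !mul1n.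
Qed.

Lemma chrom_count_diff_Dn k :
  chrom_count_diff (@Dn_arc n) k v1 vn = k ^ (n - 1) * (k - 1).
Proof.
rewrite /chrom_count_diff (card_partition_at _ v1).
rewrite (eq_bigr (fun _ => (k - 1) * k ^ (n - 2))) => [|a _].
  rewrite sum_nat_const card_ord.
  have -> : n - 1 = (n - 2).+1 by lia.
  by rewrite expnS mulnCA mulnC.
transitivity #|[set c : {ffun 'I_n -> 'I_k} |
  [&& c v1 \in [set a], c vn \in [set~ a]
    & [forall m, middle m ==> (c m \in [set: 'I_k])]]]|.
  apply: eq_card => c; rewrite !inE proper_DnE.
  have [-> | _] := eqVneq (c v1) a; last by rewrite andbF.
  case: (c vn =P a) => [-> | /eqP cna]; first by rewrite eqxx /= andbF.
  by rewrite [a == _]eq_sym cna /=; apply/esym/forallP => m; rewrite inE implybT.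
by rewrite card_colorings_constrained cards1 cardsC1 cardsT card_ord subn1 mul1n.
Qed.

End Tournament.

Theorem mainTheorem10 (n k : nat) (v1 vn : 'I_n) :
  2 <= n -> 0 < k -> val v1 = 0 -> val vn = n.-1 ->
  [/\ chrom_count_same (@Dn_arc n) k v1 vn = k * (k - 1) ^ (n - 2),
      chrom_count_diff (@Dn_arc n) k v1 vn = k ^ (n - 1) * (k - 1)
    & chrom_count (@Dn_arc n) k = k * (k - 1) ^ (n - 2) + k ^ (n - 1) * (k - 1)].
Proof.
move=> n_ge2 _ v1E vnE.
have same := chrom_count_same_Dn n_ge2 v1E vnE k.
have diff := chrom_count_diff_Dn n_ge2 v1E vnE k.
by split=> //; rewrite (chrom_count_same_diff _ _ v1 vn) same diff.
Qed.
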